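(* Let $\Gamma$ be a metrized graph and let $p,q,s,t,u\in\Gamma$ with $p\neq q$. Then $$j_u(t,s)=j_u^{\Gamma_{pq}}(t,s)+\frac{\big(j_p(q,t)-j_p(q,u)\big)^2+\big(j_p(q,s)-j_p(q,u)\big)^2-\big(j_p(q,t)-j_p(q,s)\big)^2}{2r(p,q)}$$ $$=j_u^{\Gamma_{pq}}(t,s)+\frac{1}{r(p,q)}\big(j_p(q,u)-j_p(q,t)\big)\big(j_p(q,u)-j_p(q,s)\big).$$
   Context: A metrized graph $\Gamma$ is a finite connected graph (multiple edges and self-loops allowed) in which each edge is identified with a closed line segment of positive length. $\Gamma$ is regarded as a resistive electric circuit in which each edge is a resistor whose resistance equals its length. $r(x,y)$ is the effective resistance between $x$ and $y$; $j_z(x,y)$ is the voltage at $x$ when a unit current enters at $y$ and exits at $z$, with reference voltage $0$ at $z$. $\Gamma_{pq}$ is the metrized graph obtained from $\Gamma$ by identifying $p$ and $q$, and $j^{\Gamma_{pq}}$ is its voltage function. *)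

From mathcomp Require Import all_boot all_order all_algebra.
From mathcomp Require Import reals.
From Stdlib Require Import ClassicalEpsilon.
Unset Printing Implicit Defensive.
Import Order.TTheory GRing.Theory Num.Theory.
Local Open Scope ring_scope.

(* A model of a metrized graph: finitely many vertices, finitely many edges
   (multiple edges and self-loops allowed), each edge e joining src G e and
   tgt G e and being a resistor of resistance (length) len G e. *)
Record mgraph (R : realType) := MGraph {
  V : finType;
  E : finType;
  src : E -> V;
  tgt : E -> V;
  len : E -> R }.
Arguments V {R}. Arguments E {R}. Arguments src {R} G : rename. Arguments tgt {R} G : rename.
Arguments len {R} G : rename. Arguments MGraph {R}.

Definition adj {R} (G : mgraph R) : rel (V G) := fun x y =>
  [exists e : E G, ((src G e == x) && (tgt G e == y)) || ((src G e == y) && (tgt G e == x))].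

Definition is_metrized {R} (G : mgraph R) : Prop :=
  (forall e : E G, 0 < len G e) /\ (forall x y : V G, connect (adj G) x y).

Definition outflow {R} (G : mgraph R) (f : V G -> R) (v : V G) : R :=
  \sum_(e : E G)
    ((if src G e == v then (f v - f (tgt G e)) / len G e else 0) +
     (if tgt G e == v then (f v - f (src G e)) / len G e else 0)).

(* f is the potential when a unit current enters at y and exits at z,
   with reference voltage 0 at z (Kirchhoff's laws). *)
Definition is_voltage {R} (G : mgraph R) (z y : V G) (f : V G -> R) : Prop :=
  f z = 0 /\
  forall v, outflow G f v = (if v == y then 1 else 0) - (if v == z then 1 else 0).

(* j_z(x,y) : voltage at x, unit current entering at y and exiting at z,
   reference voltage 0 at z. *)
Definition jv {R} (G : mgraph R) (z x y : V G) : R :=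
  (epsilon (inhabits (fun _ : V G => 0 : R)) (is_voltage G z y)) x.

(* effective resistance r(x,y) = voltage difference between x and y when a
   unit current enters at x and exits at y, i.e. j_y(x,x). *)
Definition reff {R} (G : mgraph R) (x y : V G) : R := jv G y x x.

(* Gamma_pq : identify q with p.  Vertex set: V minus q, with q sent to p. *)
Definition gV {R} {G : mgraph R} (q : V G) : finType := {v : V G | v != q}.

Definition gmap {R} {G : mgraph R} {p q : V G} (hpq : p != q) (v : V G) : gV q :=
  insubd (exist (fun w => w != q) p hpq) v.

Definition glue {R} {G : mgraph R} {p q : V G} (hpq : p != q) : mgraph R :=
  MGraph (gV q) (E G) (fun e => gmap hpq (src G e)) (fun e => gmap hpq (tgt G e))
    (len G).

(* With h := j_p(., q) and f := j_u(., s), the potential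
   phi := f - c (h - h u), c := (h s - h u) / h q, takes the same value at p
   and q, because reciprocity gives f q - f p = h s - h u. Hence phi descends
   to Gamma_pq, where it satisfies Kirchhoff's laws for a unit current from s
   to u: the source/sink terms c at p and q cancel once p and q are identified.
   So phi is j_u^{Gamma_pq}(., s), and the formula follows from h q = r(p,q)
   and h x = j_p(q, x). Reciprocity, uniqueness and positivity of r all come
   from Green's identity sum_v g v * outflow f v = dirichlet f g. *)

From HB Require Import structures.
From mathcomp Require Import all_boot all_order all_algebra.
From mathcomp Require Import reals ring.
From Stdlib Require Import ClassicalEpsilon.
Import Order.TTheory GRing.Theory Num.Theory.
Local Open Scope ring_scope.

Lemma sumr_if_eq {R : nmodType} {T : finType} (a : T) (F : T -> R) :
  \sum_v (if a == v then F v else 0) = F a.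
Proof. by rewrite (bigD1 a) //= eqxx big1 ?addr0 // => v; rewrite eq_sym => /negbTE ->. Qed.

Lemma sumr_mul_delta {R : pzSemiRingType} {T : finType} (g : T -> R) (a : T) :
  \sum_v g v * (if v == a then 1 else 0) = g a.
Proof. by rewrite (bigD1 a) //= eqxx mulr1 big1 ?addr0 // => v /negbTE ->; rewrite mulr0. Qed.

Lemma connect_homo (T T' : finType) (e : rel T) (e' : rel T') (h : T -> T') :
  {homo h : x y / e x y >-> e' x y} ->
  forall x y, connect e x y -> connect e' (h x) (h y).
Proof.
move=> hom x _ /connectP[s es ->]; apply/connectP; exists (map h s).
  exact: homo_path es.
by rewrite last_map.
Qed.

Lemma connect_const (T : finType) (e : rel T) (U : eqType) (f : T -> U) :
  (forall x y, e x y -> f x = f y) -> forall x y, connect e x y -> f x = f y.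
Proof.
move=> fe x y; have cl : closed e [pred w | f w == f x] by move=> a b /fe; rewrite !inE => ->.
by move/(closed_connect cl); rewrite !inE eqxx => /esym/eqP ->.
Qed.

Section Network.
Variables (R : realType) (G : mgraph R).
Implicit Types (f g : V G -> R) (x y z : V G).

Definition dirichlet f g : R :=
  \sum_e (f (src G e) - f (tgt G e)) * (g (src G e) - g (tgt G e)) / len G e.

Lemma dirichletC f g : dirichlet f g = dirichlet g f.
Proof. by apply: eq_bigr => e _; rewrite [_ * (g _ - _)]mulrC. Qed.

Lemma green f g : \sum_v g v * outflow G f v = dirichlet f g.
Proof.
rewrite /outflow; under eq_bigr do rewrite mulr_sumr; rewrite exchange_big /=.
apply: eq_bigr => e _.
under eq_bigr => v _ do rewrite mulrDr !(fun_if (fun r => g v * r)) !mulr0.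
rewrite big_split /= !sumr_if_eq; ring.
Qed.

Lemma eq_outflow f g : f =1 g -> outflow G f =1 outflow G g.
Proof. by move=> fg v; apply: eq_bigr => e _; rewrite !fg. Qed.

Lemma outflow_affine f g a b k v :
  outflow G (fun w => a * f w + b * g w + k) v = a * outflow G f v + b * outflow G g v.
Proof.
rewrite /outflow !mulr_sumr -big_split /=; apply: eq_bigr => e _.
by case: ifP => _; case: ifP => _; ring.
Qed.

Lemma outflow_const (c : R) v : outflow G (fun _ => c) v = 0.
Proof. by rewrite /outflow big1 // => e _; rewrite subrr mul0r !if_same addr0. Qed.

Lemma sum_outflow f : \sum_v outflow G f v = 0.
Proof.
have := green f (fun _ => 1); under eq_bigr do rewrite mul1r; move=> ->.
by rewrite /dirichlet big1 // => e _; rewrite subrr mulr0 mul0r.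
Qed.

Lemma sum_mul_voltage z y f g :
  is_voltage G z y f -> \sum_v g v * outflow G f v = g y - g z.
Proof. by case=> _ hf; under eq_bigr do rewrite hf mulrBr; rewrite sumrB !sumr_mul_delta. Qed.

Hypothesis hG : is_metrized G.

Lemma dirichlet_ge0 f : 0 <= dirichlet f f.
Proof. by apply: sumr_ge0 => e _; rewrite -expr2 divr_ge0 ?sqr_ge0 ?ltW ?hG.1. Qed.

Lemma dirichlet_eq0 f : dirichlet f f = 0 -> forall x y, f x = f y.
Proof.
move=> f0; have edge_eq e : f (src G e) = f (tgt G e).
  have term_ge0 i : true ->
      0 <= (f (src G i) - f (tgt G i)) * (f (src G i) - f (tgt G i)) / len G i.
    by rewrite -expr2 divr_ge0 ?sqr_ge0 ?ltW ?hG.1.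
  move: (psumr_eq0P term_ge0 f0 (i := e) isT) => /eqP.
  by rewrite mulf_eq0 invr_eq0 (gt_eqF (hG.1 e)) orbF mulf_eq0 orbb subr_eq0 => /eqP.
move=> x y; apply: connect_const (hG.2 x y) => a b.
by case/existsP=> e /orP[] /andP[/eqP <- /eqP <-]; rewrite edge_eq.
Qed.

Lemma harmonic_const f : (forall v, outflow G f v = 0) -> forall x y, f x = f y.
Proof.
move=> hf; apply: dirichlet_eq0; rewrite -green.
by rewrite big1 // => v _; rewrite hf mulr0.
Qed.

Lemma voltage_uniq z y f1 f2 : is_voltage G z y f1 -> is_voltage G z y f2 -> f1 =1 f2.
Proof.
move=> [f1z h1] [f2z h2] x; apply/eqP; rewrite -subr_eq0; apply/eqP.
have hd v : outflow G (fun w => 1 * f1 w + (-1) * f2 w + 0) v = 0.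
  by rewrite outflow_affine h1 h2 mul1r mulN1r subrr.
by have /= := harmonic_const _ hd x z; rewrite f1z f2z !mulN1r !mul1r !addr0 subrr.
Qed.

Section Existence.
Variable z : V G.

(* Adding the value at z makes the Laplacian injective, hence surjective; a
   preimage of a zero-sum vector vanishes at z since outflows sum to zero. *)
Definition grounded_laplacian (x : {ffun V G -> R^o}) : {ffun V G -> R^o} :=
  [ffun v => outflow G x v + (if v == z then x z else 0)].

Lemma grounded_laplacian_is_linear : linear grounded_laplacian.
Proof.
move=> a x y; apply/ffunP => v; rewrite !ffunE.
have -> : outflow G (a *: x + y) v = outflow G (fun w => a * x w + 1 * y w + 0) v.
  by apply: eq_outflow => w; rewrite !ffunE mul1r addr0.
by rewrite outflow_affine mul1r; case: ifP => _; rewrite /GRing.scale /=; ring.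
Qed.

HB.instance Definition _ := GRing.isLinear.Build R {ffun V G -> R^o} {ffun V G -> R^o}
  *:%R grounded_laplacian grounded_laplacian_is_linear.

Lemma grounded_laplacianP (x b : {ffun V G -> R^o}) :
  grounded_laplacian x = b -> \sum_v b v = 0 -> x z = 0 /\ forall v, outflow G x v = b v.
Proof.
move=> <-; under eq_bigr do rewrite ffunE eq_sym.
rewrite big_split /= sum_outflow add0r.
rewrite sumr_if_eq => xz0; split=> // v.
by rewrite ffunE xz0 if_same addr0.
Qed.

Lemma exists_voltage y : exists f, is_voltage G z y f.
Proof.
pose L := linfun grounded_laplacian.
have L_inj : lker L == 0%VS.
  apply/lker0P => x1 x2; rewrite !lfunE /= => eqL.
  have [dz dharm] : (x1 - x2) z = 0 /\ forall v, outflow G (x1 - x2) v = (0 : {ffun V G -> R^o}) v.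
    apply: grounded_laplacianP; first by rewrite linearB /= eqL subrr.
    by rewrite big1 // => v _; rewrite ffunE.
  apply/ffunP => v; apply/eqP; rewrite -subr_eq0.
  have harm w : outflow G (x1 - x2) w = 0 by rewrite dharm ffunE.
  have := harmonic_const _ harm v z.
  by rewrite dz !ffunE => ->.
pose b : {ffun V G -> R^o} := [ffun v => (if v == y then 1 else 0) - (if v == z then 1 else 0)].
have sum_b : \sum_v b v = 0.
  by under eq_bigr => v _ do rewrite ffunE !(eq_sym v); rewrite sumrB !sumr_if_eq subrr.
have /= := lker0_lfunVK L_inj b; rewrite lfunE /= => /grounded_laplacianP /(_ sum_b) [xz hx].
by exists (L^-1%VF b); split=> // v; rewrite hx ffunE.
Qed.
End Existence.

Lemma jv_voltage z y : is_voltage G z y (jv G z ^~ y).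
Proof. exact: epsilon_spec (exists_voltage z y). Qed.

Lemma voltage_jv z y f : is_voltage G z y f -> forall x, jv G z x y = f x.
Proof. exact: voltage_uniq (jv_voltage z y). Qed.

Lemma jv_ground z y : jv G z z y = 0.
Proof. exact: (jv_voltage z y).1. Qed.

Lemma jv_reciprocity z1 y1 z2 y2 :
  jv G z2 y1 y2 - jv G z2 z1 y2 = jv G z1 y2 y1 - jv G z1 z2 y1.
Proof.
rewrite -(sum_mul_voltage _ _ _ (jv G z2 ^~ y2) (jv_voltage z1 y1)).
by rewrite -(sum_mul_voltage _ _ _ (jv G z1 ^~ y1) (jv_voltage z2 y2)) !green dirichletC.
Qed.

Lemma jvC z x y : jv G z x y = jv G z y x.
Proof. by have := jv_reciprocity z x z y; rewrite !jv_ground !subr0. Qed.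

Lemma reffC x y : reff G x y = reff G y x.
Proof. by have := jv_reciprocity y x x y; rewrite !jv_ground !sub0r => /oppr_inj. Qed.

Lemma reff_gt0 x y : x != y -> 0 < reff G x y.
Proof.
move=> xy; set f := jv G y ^~ x; have hf : is_voltage G y x f := jv_voltage y x.
have energy : dirichlet f f = reff G x y.
  by rewrite -green (sum_mul_voltage _ _ _ _ hf) hf.1 subr0.
rewrite lt_def -energy dirichlet_ge0 andbT; apply/eqP => /dirichlet_eq0 f_const.
have := hf.2 x; rewrite (eq_outflow _ (fun _ => f y)) // outflow_const.
by rewrite eqxx (negbTE xy) subr0 => /esym/eqP; rewrite oner_eq0.
Qed.

End Network.

Arguments eq_outflow {R G} f g.
Arguments jv_voltage {R G} hG z y.
Arguments voltage_jv {R G} hG {z y f}.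
Arguments jv_reciprocity {R G} hG.
Arguments jvC {R G} hG.
Arguments reff_gt0 {R G} hG {x y}.

Section Glue.
Variables (R : realType) (G : mgraph R) (p q : V G) (hpq : p != q).

Lemma gmap_val (w : gV q) : gmap hpq (val w) = w.
Proof. by apply: val_inj; rewrite val_insubd (valP w). Qed.

Lemma gmap_q : gmap hpq q = gmap hpq p.
Proof. by apply: val_inj; rewrite !val_insubd /= eqxx hpq. Qed.

Lemma val_gmap_eq (phi : V G -> R) : phi q = phi p -> forall v, phi (val (gmap hpq v)) = phi v.
Proof. by move=> phi_qp v; rewrite val_insubd; case: ifPn => // /negbNE /eqP ->. Qed.

Lemma glue_metrized : is_metrized G -> is_metrized (glue hpq).
Proof.
case=> len_gt0 conn; split=> // w1 w2; rewrite -(gmap_val w1) -(gmap_val w2).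
apply: connect_homo (conn _ _) => x y /existsP[e exy]; apply/existsP; exists e => /=.
by case/orP: exy => /andP[/eqP -> /eqP ->]; rewrite !eqxx ?orbT.
Qed.

Lemma outflow_glue (F : gV q -> R) w :
  outflow (glue hpq) F w =
  \sum_v (if gmap hpq v == w then 1 else 0) * outflow G (F \o gmap hpq) v.
Proof.
rewrite -(sumr_mul_delta (outflow (glue hpq) F) w).
under eq_bigr do rewrite mulrC.
by rewrite !green.
Qed.

Lemma glue_voltage (phi : V G -> R) u s k :
  phi q = phi p -> phi u = 0 ->
  (forall v, outflow G phi v = (if v == s then 1 else 0) - (if v == u then 1 else 0)
                              + k * ((if v == p then 1 else 0) - (if v == q then 1 else 0))) ->
  is_voltage (glue hpq) (gmap hpq u) (gmap hpq s) (fun w => phi (val w)).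
Proof.
move=> phi_qp phi_u phi_flow; split; first by rewrite val_gmap_eq.
move=> w; rewrite outflow_glue.
under eq_bigr => v _ do rewrite (eq_outflow _ _ (val_gmap_eq _ phi_qp)) phi_flow.
under eq_bigr do rewrite mulrDr mulrBr mulrCA mulrBr.
rewrite big_split /= sumrB -mulr_sumr sumrB !sumr_mul_delta gmap_q subrr mulr0 addr0.
by rewrite !(eq_sym w).
Qed.
End Glue.

Arguments val_gmap_eq {R G p q} hpq {phi}.
Arguments glue_metrized {R G p q} hpq.
Arguments glue_voltage {R G p q} hpq {phi u s k}.

Theorem theorem2p7 (R : realType) (G : mgraph R) (hG : is_metrized G)
    (p q s t u : V G) (hpq : p != q) :
  jv G u t s =
    jv (glue hpq) (gmap hpq u) (gmap hpq t) (gmap hpq s)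
    + ((jv G p q t - jv G p q u) ^+ 2 + (jv G p q s - jv G p q u) ^+ 2
        - (jv G p q t - jv G p q s) ^+ 2) / (2 * reff G p q)
  /\
  jv G u t s =
    jv (glue hpq) (gmap hpq u) (gmap hpq t) (gmap hpq s)
    + (jv G p q u - jv G p q t) * (jv G p q u - jv G p q s) / reff G p q.
Proof.
pose f := jv G u ^~ s; pose h := jv G p ^~ q.
have [fu f_flow] : is_voltage G u s f := jv_voltage hG u s.
have [hp h_flow] : is_voltage G p q h := jv_voltage hG p q.
have reff_pq : reff G p q = h q by rewrite reffC.
have hq_neq0 : h q != 0 by rewrite -reff_pq lt0r_neq0 ?reff_gt0.
have f_qp : f q - f p = h s - h u by exact/esym/jv_reciprocity.
pose c := (h s - h u) / h q; pose phi w := f w - c * (h w - h u).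
have phi_qp : phi q = phi p by rewrite /phi /c hp -f_qp; field.
have phi_u : phi u = 0 by rewrite /phi fu subrr mulr0 subr0.
have phi_flow v : outflow G phi v = (if v == s then 1 else 0) - (if v == u then 1 else 0)
    + c * ((if v == p then 1 else 0) - (if v == q then 1 else 0)).
  rewrite (eq_outflow _ (fun w => 1 * f w + (- c) * h w + c * h u)); last first.
    by move=> w; rewrite /phi; ring.
  by rewrite outflow_affine f_flow h_flow; ring.
have := voltage_jv (glue_metrized hpq hG) (glue_voltage hpq phi_qp phi_u phi_flow) (gmap hpq t).
rewrite val_gmap_eq // => ->.
rewrite !(jvC hG p q) reff_pq /phi /c /f /h.
by split; field.
Qed.
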